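(* Let $(X,d_X)$ and $(\Lambda,d_\Lambda)$ be complete metric spaces and, for each $\lambda\in\Lambda$, let $S_\lambda(\cdot,\cdot)$ be a process on $X$. Suppose there exists a compact set $K\subseteq X$ such that (a) for every bounded $B\subseteq X$ and each $\lambda\in\Lambda$ there exists $t_{B,\lambda}$ such that $S_\lambda(t+s,s)B\subseteq K$ for all $t\ge t_{B,\lambda}$ and all $s\in\mathbb R$; and (b) for any $t>0$, the map $\lambda\mapsto S_\lambda(t+s,s)x$ is continuous on $\Lambda$, uniformly for $s\in\mathbb R$ and $x\in K$ (i.e. for each $\lambda_0\in\Lambda$, $t>0$, $\epsilon>0$ there is $\delta>0$ such that $d_\Lambda(\lambda,\lambda_0)<\delta$ implies $d_X(S_\lambda(t+s,s)x,S_{\lambda_0}(t+s,s)x)<\epsilon$ for all $s\in\mathbb R$, $x\in K$). Then the map $\lambda\mapsto\mathbb A_\lambda$, where $\mathbb A_\lambda$ is the uniform attractor of $S_\lambda$, is continuous with respect to the Hausdorff distance at every point of a residual subset of $\Lambda$.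
   Context: A process on a complete metric space $(X,d_X)$ is a two-parameter family of maps $S(t,s):X\to X$, $s\in\mathbb R$, $t\ge s$, with $S(t,t)=\mathrm{id}$, $S(t,\tau)S(\tau,s)=S(t,s)$ for $t\ge\tau\ge s$, and $S(t,s)x$ continuous in $(x,t,s)$. The Hausdorff semi-distance is $\rho_X(A,C)=\sup_{a\in A}\inf_{c\in C}d_X(a,c)$ and the Hausdorff distance is $\Delta_X(A,C)=\max(\rho_X(A,C),\rho_X(C,A))$. The uniform attractor of a process $S$ is the minimal compact set $\mathbb A\subseteq X$ such that $\lim_{t\to\infty}\sup_{s\in\mathbb R}\rho_X(S(t+s,s)B,\mathbb A)=0$ for every bounded $B\subseteq X$; under assumption (a) the uniform attractor $\mathbb A_\lambda$ of $S_\lambda$ exists for each $\lambda$. A subset of $\Lambda$ is residual if its complement is a countable union of nowhere dense sets. *)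

From HB Require Import structures.
From mathcomp Require Import all_boot all_order all_algebra.
From mathcomp Require Import all_classical all_reals.
From mathcomp Require Import ereal.
Set Implicit Arguments. Unset Strict Implicit. Unset Printing Implicit Defensive.
Import Order.TTheory GRing.Theory Num.Theory.
Local Open Scope classical_set_scope.
Local Open Scope ring_scope.

Section MetricDefs.
Variables (R : realType) (X : Type) (d : X -> X -> R).

Definition is_metric : Prop :=
  (forall x y, 0 <= d x y) /\ (forall x y, d x y = 0 <-> x = y) /\
  (forall x y, d x y = d y x) /\ (forall x y z, d x z <= d x y + d y z).

Definition metric_cauchy (u : nat -> X) : Prop :=
  forall e : R, 0 < e -> exists N : nat, forall m n, (N <= m)%N -> (N <= n)%N -> d (u m) (u n) < e.

Definition metric_conv (u : nat -> X) (l : X) : Prop :=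
  forall e : R, 0 < e -> exists N : nat, forall n, (N <= n)%N -> d (u n) l < e.

Definition complete_metric : Prop :=
  is_metric /\ forall u : nat -> X, metric_cauchy u -> exists l, metric_conv u l.

Definition mbounded (B : set X) : Prop :=
  exists x0 (r : R), forall b, B b -> d x0 b <= r.

(* sequential compactness (equivalent to compactness in metric spaces) *)
Definition mcompact (K : set X) : Prop :=
  forall u : nat -> X, (forall n, K (u n)) ->
    exists (phi : nat -> nat) (l : X), (forall n, (phi n < phi n.+1)%N) /\ K l /\
      metric_conv (u \o phi) l.

Definition mclosure (A : set X) : set X :=
  fun x => forall e : R, 0 < e -> exists a, A a /\ d x a < e.

Definition nowhere_dense (N : set X) : Prop :=
  ~ exists x (e : R), 0 < e /\ (forall y, d x y < e -> mclosure N y).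

Definition residual (G : set X) : Prop :=
  exists N : nat -> set X, (forall n, nowhere_dense (N n)) /\ ~` G = \bigcup_n N n.

Definition hsemidist (A C : set X) : \bar R :=
  ereal_sup [set ereal_inf [set (d a c)%:E | c in C] | a in A].

Definition hdist (A C : set X) : \bar R :=
  Order.max (hsemidist A C) (hsemidist C A).
End MetricDefs.

Section ProcessDefs.
Variables (R : realType) (X : Type) (d : X -> X -> R).

(* S t s x = S(t,s)x ; only meaningful for t >= s *)
Definition is_process (S : R -> R -> X -> X) : Prop :=
  (forall t x, S t t x = x) /\
  (forall t tau s x, tau <= t -> s <= tau -> S t tau (S tau s x) = S t s x) /\
  (forall x t s, s <= t -> forall e : R, 0 < e -> exists del : R, 0 < del /\
     forall x' t' s', s' <= t' -> d x x' < del -> `|t - t'| < del -> `|s - s'| < del ->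
       d (S t s x) (S t' s' x') < e).

(* A uniformly attracts bounded sets:
   lim_{t->oo} sup_s rho(S(t+s,s)B, A) = 0 (written as: eventually <= e, for all e>0) *)
Definition unif_attracting (S : R -> R -> X -> X) (A : set X) : Prop :=
  forall B, mbounded d B -> forall e : R, 0 < e -> exists T : R, forall t, T <= t ->
    (ereal_sup [set hsemidist d (S (t + s)%R s @` B) A | s in [set: R]] <= e%:E)%E.

Definition is_uniform_attractor (S : R -> R -> X -> X) (A : set X) : Prop :=
  mcompact d A /\ unif_attracting S A /\
  forall C, mcompact d C -> unif_attracting S C -> A `<=` C.
End ProcessDefs.

(* The sets f_n(lam) = closure of the union over s of S_lam(n+1+s, s) K depend
   Hausdorff-continuously on lam by (b), and converge to A_lam as n -> oo: they
   contain A_lam by minimality of the attractor, and lie in any neighbourhood of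
   A_lam for large n because A_lam attracts K.  A pointwise limit of continuous
   maps is continuous on a residual set (Osgood's argument via the Baire category
   theorem), which gives the theorem. *)
From HB Require Import structures.
From mathcomp Require Import all_boot all_order all_algebra.
From mathcomp Require Import all_classical all_reals.
From mathcomp Require Import ereal lra.
Import Order.TTheory GRing.Theory Num.Theory.
Local Open Scope classical_set_scope.
Local Open Scope ring_scope.
Set Implicit Arguments. Unset Strict Implicit.

Lemma homo_ltn_infl (phi : nat -> nat) :
  (forall n, (phi n < phi n.+1)%N) -> forall n, (n <= phi n)%N.
Proof. by move=> phiS; elim=> [|n IHn] //; exact: leq_ltn_trans IHn (phiS n). Qed.

Lemma nat_eventually_ge (R : realType) (T : R) :
  exists N, forall n, (N <= n)%N -> T <= n%:R.
Proof.
exists (Num.bound `|T|) => n Nn; apply: le_trans (ler_norm T) _.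
apply/ltW/(lt_le_trans (archi_boundP (normr_ge0 T))); by rewrite ler_nat.
Qed.

Section MetricFacts.
Variables (R : realType) (T : Type) (d : T -> T -> R).
Hypothesis md : is_metric d.

Lemma metric_xx x : d x x = 0. Proof. by case: md => _ [dP _]; apply/dP. Qed.
Lemma metric_sym x y : d x y = d y x. Proof. by case: md => _ [_ []]. Qed.
Lemma metric_triangle x y z : d x z <= d x y + d y z.
Proof. by case: md => _ [_ [_]]. Qed.

Definition mclosed (E : set T) := mclosure d E `<=` E.

Lemma subset_mclosure P : P `<=` mclosure d P.
Proof. by move=> a Pa e e0; exists a; rewrite metric_xx. Qed.

Lemma mcompact_mbounded (x0 : T) K : mcompact d K -> mbounded d K.
Proof.
move=> cK; apply: contrapT => Kunb.
have far n : exists b, K b /\ n%:R < d x0 b.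
  apply: contrapT => nfar; apply: Kunb; exists x0, n%:R => b Kb.
  by rewrite leNgt; apply/negP => lt; apply: nfar; exists b.
have [u uP] := choice far.
have [phi [l [phiS [_ ul]]]] := cK u (fun n => (uP n).1).
have [N uNl] := ul 1 ltr01.
have [M lM] := nat_eventually_ge (d x0 l + 1).
pose n := maxn N M.
have dl := uNl n (leq_maxl _ _); have dM := lM n (leq_maxr _ _).
have dphi := (uP (phi n)).2; rewrite /= metric_sym in dl.
have nphi : n%:R <= (phi n)%:R :> R by rewrite ler_nat homo_ltn_infl.
have := metric_triangle x0 l (u (phi n)); lra.
Qed.

Lemma mcompact_setI_mclosure K P : mcompact d K -> mcompact d (K `&` mclosure d P).
Proof.
move=> cK u uKP; have [phi [l [phiS [Kl ul]]]] := cK u (fun n => (uKP n).1).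
exists phi, l; split=> //; split=> //; split=> // eta eta0.
have [N uNl] := ul (eta / 2) ltac:(lra); have := uNl N (leqnn N) => /= uNl'.
have [p [Pp up]] := (uKP (phi N)).2 (eta / 2) ltac:(lra).
exists p; split=> //; have := metric_triangle l (u (phi N)) p.
by rewrite metric_sym in uNl'; lra.
Qed.

Definition hclose (P Q : set T) (e : R) :=
  (forall a, P a -> exists2 c, Q c & d a c < e) /\
  (forall a, Q a -> exists2 c, P c & d a c < e).

Lemma hclose_sym P Q e : hclose P Q e -> hclose Q P e.
Proof. by case. Qed.

Lemma hclose_trans P Q W e1 e2 :
  hclose P Q e1 -> hclose Q W e2 -> hclose P W (e1 + e2).
Proof.
have chain (U V Z : set T) (r1 r2 : R) :
    (forall a, U a -> exists2 c, V c & d a c < r1) ->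
    (forall a, V a -> exists2 c, Z c & d a c < r2) ->
    forall a, U a -> exists2 c, Z c & d a c < r1 + r2.
  move=> UV VZ a /UV [b Vb ab]; have [c Zc bc] := VZ b Vb.
  by exists c => //; have := metric_triangle a b c; lra.
case=> PQ QP [QW WQ]; split; first exact: chain PQ QW.
by move=> a Wa; have [c Pc] := chain _ _ _ _ _ WQ QP a Wa; exists c; rewrite // addrC.
Qed.

Lemma hclose_le P Q e1 e2 : e1 <= e2 -> hclose P Q e1 -> hclose P Q e2.
Proof.
move=> e12 [PQ QP]; split=> a.
- by move=> /PQ [c Qc ac]; exists c => //; lra.
- by move=> /QP [c Pc ac]; exists c => //; lra.
Qed.

Lemma hclose_mclosure P e : 0 < e -> hclose (mclosure d P) P e.
Proof.
move=> e0; split=> a; first by move=> /(_ e e0) [c [Pc ac]]; exists c.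
by move=> Pa; exists a; [exact: subset_mclosure | rewrite metric_xx].
Qed.

Lemma hclose_image2 (I J : Type) (U : set I) (V : set J) (F G : I -> J -> T) e :
  (forall i j, U i -> V j -> d (F i j) (G i j) < e) ->
  hclose [set F i j | i in U & j in V] [set G i j | i in U & j in V] e.
Proof.
move=> FG; split=> _ [i Ui [j Vj <-]].
- by exists (G i j); [exists i => //; exists j | exact: FG].
- by exists (F i j); [exists i => //; exists j | rewrite metric_sym; exact: FG].
Qed.

Lemma hsemidist_le P Q e :
  (forall a, P a -> exists2 c, Q c & d a c <= e) -> (hsemidist d P Q <= e%:E)%E.
Proof.
move=> PQ; apply: ge_ereal_sup => _ [a Pa <-]; have [c Qc ac] := PQ a Pa.
by apply: ge_ereal_inf; exists (d a c)%:E; [exists c | rewrite lee_fin].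
Qed.

Lemma hsemidist_lt_witness P Q e a :
  (hsemidist d P Q < e%:E)%E -> P a -> exists2 c, Q c & d a c < e.
Proof.
move=> PQe Pa.
have : (ereal_inf [set (d a c)%:E | c in Q] < e%:E)%E.
  by apply: le_lt_trans PQe; apply: ereal_sup_ubound; exists a.
by case/ereal_inf_lt => _ [c Qc <-]; rewrite lte_fin; exists c.
Qed.

Lemma hdist_lt_hclose P Q e' e :
  e' < e -> hclose P Q e' -> (hdist d P Q < e%:E)%E.
Proof.
move=> e'e [PQ QP]; rewrite /hdist gt_max.
have lt (U V : set T) : (forall a, U a -> exists2 c, V c & d a c < e') ->
    (hsemidist d U V < e%:E)%E.
  move=> UV; apply: (@le_lt_trans _ _ e'%:E); last by rewrite lte_fin.
  by apply: hsemidist_le => a /UV [c Vc /ltW]; exists c.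
by rewrite !lt.
Qed.

End MetricFacts.

Section Baire.
Variables (R : realType) (T : Type) (d : T -> T -> R).
Hypotheses (md : is_metric d)
  (d_complete : forall u, metric_cauchy d u -> exists l, metric_conv d u l).

Lemma nested_balls_le (y : nat -> T) (rho : nat -> R) :
  (forall n, d (y n) (y n.+1) + rho n.+1 <= rho n) ->
  forall m n, (m <= n)%N -> d (y m) (y n) + rho n <= rho m.
Proof.
move=> nest m; elim=> [|n IHn]; first by rewrite leqn0 => /eqP ->; rewrite metric_xx // add0r.
rewrite leq_eqVlt => /orP [/eqP <-|/IHn le_mn]; first by rewrite metric_xx // add0r.
have := nest n; have := metric_triangle md (y m) (y n) (y n.+1); lra.
Qed.

Lemma nested_balls_limit (y : nat -> T) (rho : nat -> R) :
  (forall n, 0 <= rho n) -> (forall e, 0 < e -> exists k, rho k < e) ->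
  (forall n, d (y n) (y n.+1) + rho n.+1 <= rho n) ->
  exists l, forall n, d (y n) l <= rho n.
Proof.
move=> rho_ge0 rho_small nest; have nestle := nested_balls_le nest.
have [l yl] : exists l, metric_conv d y l.
  apply: d_complete => e e0.
  have [k ke] := rho_small (e / 2) ltac:(lra).
  exists k => m n km kn.
  have := nestle _ _ km; have := nestle _ _ kn.
  have := rho_ge0 m; have := rho_ge0 n.
  have := metric_triangle md (y m) (y k) (y n); rewrite (metric_sym md (y m) (y k)); lra.
exists l => n; rewrite leNgt; apply/negP => far.
have [M yMl] := yl (d (y n) l - rho n) ltac:(lra).
have := yMl (maxn n M) (leq_maxr _ _); have := nestle n (maxn n M) (leq_maxl _ _).
have := rho_ge0 (maxn n M); have := metric_triangle md (y n) (y (maxn n M)) l; lra.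
Qed.

Lemma closed_ball_avoid (E : set T) y z (rho c : R) : 0 < c ->
  mclosed d E -> d y z < rho -> ~ E z ->
  exists rho', [/\ 0 < rho', rho' <= c, d y z + rho' <= rho &
    forall w, d z w <= rho' -> ~ E w].
Proof.
move=> c0 Eclosed yz nEz.
have [tau [tau0 ball_tau]] : exists tau, 0 < tau /\ forall w, d z w < tau -> ~ E w.
  apply: contrapT => nball; apply/nEz/Eclosed => e e0; apply: contrapT => nEe.
  by apply: nball; exists e; split => // w zw Ew; apply: nEe; exists w.
pose rho' := Num.min (Num.min (tau / 2) ((rho - d y z) / 2)) c.
have [m1 m2 m3] : [/\ rho' <= tau / 2, rho' <= (rho - d y z) / 2 & rho' <= c].
  by rewrite !ge_min !lexx !orbT.
have rho'0 : 0 < rho' by rewrite !lt_min c0 andbT; apply/andP; split; lra.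
exists rho'; split=> //; first lra.
by move=> w zw; apply: ball_tau; lra.
Qed.

Lemma baire_ball (E : nat -> set T) x (r : R) : 0 < r ->
  (forall N, mclosed d (E N)) -> (forall w, d x w < r -> exists N, E N w) ->
  exists N y rho, [/\ d x y < r, 0 < rho & forall w, d y w < rho -> E N w].
Proof.
move=> r0 Eclosed Ecover; apply: contrapT => noball.
(* Otherwise nested closed balls avoiding E 0, E 1, ... shrink to a point of the
   ball B(x, r) that lies in no E N. *)
have step (p : nat * (T * R)) : exists q : T * R,
    0 < p.2.2 /\ d x p.2.1 + p.2.2 <= r ->
    [/\ 0 < q.2, q.2 <= p.1.+1%:R^-1, d p.2.1 q.1 + q.2 <= p.2.2,
      d x q.1 + q.2 <= r & forall w, d q.1 w <= q.2 -> ~ E p.1 w].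
  case: p => N [y rho] /=.
  have [[rho0 xy]|] := pselect (0 < rho /\ d x y + rho <= r); last by exists (x, 0).
  have [z [yz nEz]] : exists z, d y z < rho /\ ~ E N z.
    apply: contrapT => nz; apply: noball; exists N, y, rho; split => //; first lra.
    by move=> w yw; apply: contrapT => nEw; apply: nz; exists w.
  have c0 : 0 < N.+1%:R^-1 :> R by rewrite invr_gt0 ltr0n.
  have [rho' [rho'0 rho'c yzr avoid]] := closed_ball_avoid c0 (Eclosed N) yz nEz.
  exists (z, rho') => _; split=> //=; have := metric_triangle md x y z; lra.
have [g gP] := choice step.
pose c := fix c n := if n is n'.+1 then g (n', c n') else (x, r / 2).
have cP n : 0 < (c n).2 /\ d x (c n).1 + (c n).2 <= r.
  elim: n => [|n [IH1 IH2]] /=; first by rewrite metric_xx //; lra.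
  by have [] := gP (n, c n) (conj IH1 IH2).
have cS n := gP (n, c n) (cP n).
have [l cl] : exists l, forall n, d (c n).1 l <= (c n).2.
  apply: (nested_balls_limit (fun n => ltW (cP n).1)).
    move=> e /(@ltr_add_invr R 0) [k]; rewrite add0r => ke; exists k.+1.
    by have [_ ? _ _ _] := cS k; exact: le_lt_trans ke.
  by move=> n; have [] := cS n.
have [N ENl] : exists N, E N l.
  by apply: Ecover; have := cl 0%N; rewrite /= -[x in d x _]/(c 0%N).1; lra.
by have [_ _ _ _ avoid] := cS N; exact: avoid (cl N.+1) ENl.
Qed.

End Baire.

Section PointwiseLimit.
Variables (R : realType) (L Y : Type) (dL : L -> L -> R)
  (approx : Y -> Y -> R -> Prop).
Hypotheses (mL : is_metric dL)
  (dL_complete : forall u, metric_cauchy dL u -> exists l, metric_conv dL u l)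
  (approx_sym : forall u v e, approx u v e -> approx v u e)
  (approx_trans : forall u v w e1 e2,
     approx u v e1 -> approx v w e2 -> approx u w (e1 + e2))
  (approx_le : forall u v e1 e2, e1 <= e2 -> approx u v e1 -> approx u v e2).
Variables (f : nat -> L -> Y) (g : L -> Y).
Hypotheses
  (f_cont : forall n lam0 e, 0 < e -> exists2 del, 0 < del &
     forall lam, dL lam lam0 < del -> approx (f n lam) (f n lam0) e)
  (f_cvg : forall lam e, 0 < e ->
     exists N, forall n, (N <= n)%N -> approx (f n lam) (g lam) e).

Definition discontinuity_set (e : R) : set L := fun lam0 => forall del, 0 < del ->
  exists2 lam, dL lam lam0 < del & ~ approx (g lam) (g lam0) e.

Definition cauchy_tail (e : R) (N : nat) : set L := fun lam =>
  forall n m, (N <= n)%N -> (N <= m)%N ->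
    forall eta, 0 < eta -> approx (f n lam) (f m lam) (e + eta).

Lemma cauchy_tail_closed e N : mclosed dL (cauchy_tail e N).
Proof.
move=> w wcl n m Nn Nm eta eta0.
have e3 : 0 < eta / 3 by lra.
have [d1 d10 fn] := f_cont n w e3; have [d2 d20 fm] := f_cont m w e3.
have [a [tail_a wa]] := wcl (Num.min d1 d2) ltac:(by rewrite lt_min d10 d20).
rewrite metric_sym // lt_min in wa; case/andP: wa => ad1 ad2.
have := approx_trans (approx_trans (approx_sym (fn a ad1)) (tail_a n m Nn Nm _ e3)) (fm a ad2).
by apply: approx_le; lra.
Qed.

Lemma cauchy_tail_cover e w : 0 < e -> exists N, cauchy_tail e N w.
Proof.
move=> e0; have [N fN] := f_cvg w (ltac:(lra) : 0 < e / 2).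
exists N => n m Nn Nm eta eta0.
by apply: approx_le (approx_trans (fN n Nn) (approx_sym (fN m Nm))); lra.
Qed.

Lemma discontinuity_set_nowhere_dense e : 0 < e -> nowhere_dense dL (discontinuity_set e).
Proof.
move=> e0 [x [r [r0 ball_r]]].
(* On a Baire ball B(y, rho) all f n with n >= N stay within e/8 of f N, so g is
   within 3e/8 of the continuous f N there: no e-jump of g can occur near y. *)
pose ep := e / 8; have ep0 : 0 < ep by rewrite /ep; lra.
have [N [y [rho [xy rho0 tail_y]]]] := baire_ball mL dL_complete (x := x) r0
  (@cauchy_tail_closed ep) (fun w _ => cauchy_tail_cover w ep0).
have g_fN lam : dL y lam < rho -> approx (g lam) (f N lam) (3 * ep).
  move=> ylam; have [n0 fn0] := f_cvg lam ep0.
  have := approx_trans (approx_sym (fn0 (maxn N n0) (leq_maxr _ _)))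
    (tail_y lam ylam (maxn N n0) N (leq_maxl _ _) (leqnn N) ep ep0).
  by apply: approx_le; lra.
have [d1 d10 fN_y] := f_cont N y ep0.
pose tau := Num.min (rho / 2) (d1 / 2).
have [tau1 tau2] : tau <= rho / 2 /\ tau <= d1 / 2 by rewrite !ge_min !lexx orbT.
have tau0 : 0 < tau by rewrite lt_min; apply/andP; split; lra.
have [lam0 [disc_lam0 ylam0]] := ball_r y xy tau tau0.
have [lam lamlam0 nclose] := disc_lam0 tau tau0.
have ylam : dL y lam < 2 * tau.
  by have := metric_triangle mL y lam0 lam; rewrite (metric_sym mL lam0 lam); lra.
apply: nclose.
have := approx_trans (approx_trans (approx_trans (g_fN lam ltac:(lra))
  (fN_y lam ltac:(rewrite metric_sym //; lra)))
  (approx_sym (fN_y lam0 ltac:(rewrite metric_sym //; lra))))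
  (approx_sym (g_fN lam0 ltac:(lra))).
by apply: approx_le; rewrite /ep; lra.
Qed.

Theorem pointwise_limit_continuous_on_residual : exists G : set L, residual dL G /\
  forall lam0, G lam0 -> forall e, 0 < e -> exists del, 0 < del /\
    forall lam, dL lam lam0 < del -> approx (g lam) (g lam0) e.
Proof.
exists (~` \bigcup_k discontinuity_set k.+1%:R^-1); split.
  exists (fun k => discontinuity_set k.+1%:R^-1); split; last by rewrite setCK.
  by move=> k; apply: discontinuity_set_nowhere_dense; rewrite invr_gt0 ltr0n.
move=> lam0 cont_lam0 e /(@ltr_add_invr R 0) [k]; rewrite add0r => ke.
apply: contrapT => ndel; apply: cont_lam0; exists k => // del del0.
apply: contrapT => nlam; apply: ndel; exists del; split=> // lam lamlam0.
apply: (approx_le (ltW ke)); apply: contrapT => napprox; apply: nlam; by exists lam.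
Qed.

End PointwiseLimit.

Section ProcessAttractors.
Variables (R : realType) (X L : Type) (dX : X -> X -> R) (dL : L -> L -> R)
  (S : L -> R -> R -> X -> X) (A : L -> set X) (K : set X).
Hypotheses (mX : is_metric dX) (pS : forall lam, is_process dX (S lam))
  (cK : mcompact dX K)
  (absorb : forall B, mbounded dX B -> forall lam, exists tB : R,
     forall t s, 0 <= t -> tB <= t -> S lam (t + s) s @` B `<=` K)
  (cont : forall lam0 (t e : R), 0 < t -> 0 < e -> exists del : R, 0 < del /\
     forall lam, dL lam lam0 < del -> forall s x, K x ->
       dX (S lam (t + s) s x) (S lam0 (t + s) s x) < e)
  (att : forall lam, is_uniform_attractor dX (S lam) (A lam)).

Definition image_after lam (t : R) : set X :=
  [set S lam (t + s) s y | s in [set: R] & y in K].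

Definition image_hull (n : nat) lam : set X := mclosure dX (image_after lam n.+1%:R).

Lemma image_hull_cont n lam0 e : 0 < e -> exists2 del, 0 < del &
  forall lam, dL lam lam0 < del -> hclose dX (image_hull n lam) (image_hull n lam0) e.
Proof.
move=> e0; have e3 : 0 < e / 3 by lra.
have [del [del0 Sdel]] := cont lam0 (ltac:(by rewrite ltr0n) : 0 < n.+1%:R) e3.
exists del => // lam lamlam0.
have := hclose_trans mX (hclose_trans mX (hclose_mclosure mX (image_after lam n.+1%:R) e3)
  (hclose_image2 mX (fun s y _ Ky => Sdel lam lamlam0 s y Ky)))
  (hclose_sym (hclose_mclosure mX (image_after lam0 n.+1%:R) e3)).
by apply: hclose_le; lra.
Qed.

Lemma attractor_sub_mclosure_image (x0 : X) lam : exists tK : R, forall t, 0 <= t -> tK <= t ->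
  A lam `<=` mclosure dX (image_after lam t).
Proof.
have [tK absorbK] := absorb (mcompact_mbounded mX x0 cK) lam.
exists tK => t t0 tKt; case: (att lam) => _ [_ minimal].
suff : A lam `<=` K `&` mclosure dX (image_after lam t) by move=> sub x /sub [].
apply: minimal; first exact: mcompact_setI_mclosure.
(* S(t'+s, s) b = S(t+s', s') S(s', s) b with S(s', s) b in K, for t' large. *)
move=> B bB e e0; have [tB absorbB] := absorb bB lam.
exists (t + `|tB|) => t' tt'; have := ler_norm tB; have := normr_ge0 tB => ? ?.
apply: ge_ereal_sup => _ [s _ <-]; apply: hsemidist_le => _ [b Bb <-].
exists (S lam (t' + s) s b); last by rewrite metric_xx // ltW.
pose s' := (t' - t) + s; have Kb' : K (S lam s' s b).
  by apply: (absorbB (t' - t)); [lra | lra | exists b].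
have -> : S lam (t' + s) s b = S lam (t + s') s' (S lam s' s b).
  by rewrite (pS lam).2.1 /s'; [congr S; lra | lra | lra].
split; first by apply: (absorbK t s') => //; exists (S lam s' s b).
by apply: subset_mclosure => //; exists s' => //; exists (S lam s' s b).
Qed.

Lemma mclosure_image_near_attractor (x0 : X) lam e : 0 < e -> exists T : R, forall t, T <= t ->
  forall x, mclosure dX (image_after lam t) x -> exists2 c, A lam c & dX x c < e.
Proof.
move=> e0; case: (att lam) => _ [attracting _].
have [T attrK] := attracting K (mcompact_mbounded mX x0 cK) (e / 4) ltac:(lra).
exists T => t Tt x /(_ (e / 2) ltac:(lra)) [_ [[s _ [y Ky <-]] xy]].
have semi : (hsemidist dX (S lam (t + s) s @` K) (A lam) < (e / 2)%:E)%E.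
  apply: (@le_lt_trans _ _ (e / 4)%:E); last by rewrite lte_fin; lra.
  by apply: le_trans (attrK t Tt); apply: ereal_sup_ubound; exists s.
have Sy : (S lam (t + s) s @` K) (S lam (t + s) s y) by exists y.
have [c Ac yc] := hsemidist_lt_witness semi Sy.
by exists c => //; have := metric_triangle mX x (S lam (t + s) s y) c; lra.
Qed.

Lemma image_hull_cvg lam e : 0 < e ->
  exists N, forall n, (N <= n)%N -> hclose dX (image_hull n lam) (A lam) e.
Proof.
move=> e0; have [[x0]|noX] := pselect (inhabited X); last first.
  by exists 0%N => n _; split=> a; case: noX.
have [tK sub] := attractor_sub_mclosure_image x0 lam.
have [T near] := mclosure_image_near_attractor x0 lam e0.
have [N Nge] := nat_eventually_ge (Num.max tK T).
exists N => n Nn; have := Nge n Nn; rewrite ge_max => /andP [tKn Tn].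
have n1 : n%:R <= n.+1%:R :> R by rewrite ler_nat.
split; first by apply: near; exact: le_trans n1.
move=> a Aa; exists a; last by rewrite metric_xx.
by apply: (sub n.+1%:R) => //; exact: le_trans n1.
Qed.

End ProcessAttractors.

Theorem theorem4p1 (R : realType) (X L : Type) (dX : X -> X -> R) (dL : L -> L -> R)
  (S : L -> R -> R -> X -> X) (A : L -> set X) (K : set X) :
  complete_metric dX -> complete_metric dL ->
  (forall lam, is_process dX (S lam)) ->
  mcompact dX K ->
  (forall B, mbounded dX B -> forall lam, exists tB : R,
     forall t s, 0 <= t -> tB <= t -> S lam (t + s) s @` B `<=` K) ->
  (forall lam0 (t e : R), 0 < t -> 0 < e -> exists del : R, 0 < del /\
     forall lam, dL lam lam0 < del -> forall s x, K x ->
       dX (S lam (t + s) s x) (S lam0 (t + s) s x) < e) ->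
  (forall lam, is_uniform_attractor dX (S lam) (A lam)) ->
  exists G : set L, residual dL G /\
    forall lam0, G lam0 -> forall e : R, 0 < e -> exists del : R, 0 < del /\
      forall lam, dL lam lam0 < del -> (hdist dX (A lam) (A lam0) < e%:E)%E.
Proof.
move=> [mX _] [mL dL_complete] pS cK absorb cont att.
have [G [resG contG]] := pointwise_limit_continuous_on_residual mL dL_complete
  (@hclose_sym _ _ dX) (@hclose_trans _ _ _ mX) (@hclose_le _ _ dX)
  (image_hull_cont mX cont) (image_hull_cvg mX pS cK absorb att).
exists G; split=> // lam0 /contG cont_lam0 e e0.
have [del [del0 close_del]] := cont_lam0 (e / 2) ltac:(lra).
exists del; split=> // lam /close_del; apply: hdist_lt_hclose; lra.
Qed.
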